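(* Suppose $U=1$, so $\mathbf{X}_{\mathrm{u}}=\mathbf{x}^\top$ for a single $\mathbf{x}\in\mathbb{R}^d$. Assume $\phi$ is convex, $R_\phi$ is differentiable at its minimizer $\mathbf{w}_{\mathrm{sup}}$, $R^{\mathrm{semi}}_\phi(\cdot,q)$ is strictly convex for every $q\in[0,1]$, and the derivatives $\phi'(\mathbf{x}^\top\mathbf{w}_{\mathrm{sup}})$ and $\phi'(-\mathbf{x}^\top\mathbf{w}_{\mathrm{sup}})$ exist. If there is no $q\in[0,1]$ such that $$\big(\phi'(\mathbf{x}^\top\mathbf{w}_{\mathrm{sup}})+\phi'(-\mathbf{x}^\top\mathbf{w}_{\mathrm{sup}})\big)\,q\,\mathbf{x}=\phi'(-\mathbf{x}^\top\mathbf{w}_{\mathrm{sup}})\,\mathbf{x},$$ then $\mathbf{w}_{\mathrm{sup}}\notin\mathcal{C}_\phi$, and every minimizer $\mathbf{w}_{\mathrm{semi}}$ of $\mathbf{w}\mapsto\max_{q\in[0,1]}D_\phi(\mathbf{w},q)$ satisfies $\mathbf{w}_{\mathrm{semi}}\neq\mathbf{w}_{\mathrm{sup}}$ and $D_\phi(\mathbf{w}_{\mathrm{semi}},q)<0$ for all $q\in[0,1]$.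
   Context: Fix integers $L,d\ge 1$. Let $\mathbf{X}\in\mathbb{R}^{L\times d}$ be a matrix whose rows $\mathbf{x}_1^\top,\dots,\mathbf{x}_L^\top$ are the labeled objects, with labels $\mathbf{y}\in\{-1,+1\}^L$. Let $\phi:\mathbb{R}\to\mathbb{R}$ be a loss function, $\Omega:\mathbb{R}^d\to\mathbb{R}$ a convex function and $\lambda\ge 0$. The supervised risk is $R_\phi(\mathbf{w})=\sum_{i=1}^L\phi(y_i\mathbf{x}_i^\top\mathbf{w})+\lambda\Omega(\mathbf{w})$. With one unlabeled object $\mathbf{x}$ and responsibility $q\in[0,1]$, the semi-supervised risk is $R^{\mathrm{semi}}_\phi(\mathbf{w},q)=R_\phi(\mathbf{w})+q\phi(\mathbf{x}^\top\mathbf{w})+(1-q)\phi(-\mathbf{x}^\top\mathbf{w})$. Define $D_\phi(\mathbf{w},q)=R^{\mathrm{semi}}_\phi(\mathbf{w},q)-R^{\mathrm{semi}}_\phi(\mathbf{w}_{\mathrm{sup}},q)$, where $\mathbf{w}_{\mathrm{sup}}$ minimizes $R_\phi$. The constraint set is $\mathcal{C}_\phi=\{\mathbf{w}\in\mathbb{R}^d:\ \exists\,q\in[0,1] \text{ such that } \mathbf{w} \text{ minimizes } R^{\mathrm{semi}}_\phi(\cdot,q)\}$. *)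

From mathcomp Require Import ssreflect ssrfun ssrbool eqtype ssrnat seq choice fintype bigop.
From Stdlib Require Import Reals.
Open Scope R_scope.

Definition vec (d : nat) := 'I_d -> R.

Definition dot {d : nat} (u v : vec d) : R := \big[Rplus/R0]_(i < d) (u i * v i).
Definition vnorm {d : nat} (u : vec d) : R := sqrt (dot u u).
Definition vadd {d : nat} (u v : vec d) : vec d := fun i => u i + v i.
Definition vscale {d : nat} (t : R) (u : vec d) : vec d := fun i => t * u i.

Definition convex_fun (f : R -> R) : Prop :=
  forall a b t, 0 <= t <= 1 -> f (t * a + (1 - t) * b) <= t * f a + (1 - t) * f b.

Definition convex_vec {d : nat} (f : vec d -> R) : Prop :=
  forall u v t, 0 <= t <= 1 ->
    f (vadd (vscale t u) (vscale (1 - t) v)) <= t * f u + (1 - t) * f v.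

Definition strictly_convex_vec {d : nat} (f : vec d -> R) : Prop :=
  forall u v t, u <> v -> 0 < t < 1 ->
    f (vadd (vscale t u) (vscale (1 - t) v)) < t * f u + (1 - t) * f v.

Definition differentiable_at {d : nat} (f : vec d -> R) (w : vec d) : Prop :=
  exists g : vec d, forall eps, 0 < eps -> exists delta, 0 < delta /\
    forall h : vec d, vnorm h < delta ->
      Rabs (f (vadd w h) - f w - dot g h) <= eps * vnorm h.

Definition Rsup {L d : nat} (phi : R -> R) (Omega : vec d -> R) (lambda : R)
  (X : 'I_L -> vec d) (y : 'I_L -> R) (w : vec d) : R :=
  \big[Rplus/R0]_(i < L) phi (y i * dot (X i) w) + lambda * Omega w.

(* Semi-supervised risk with one unlabeled object x and responsibility q. *)
Definition Rsemi {L d : nat} (phi : R -> R) (Omega : vec d -> R) (lambda : R)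
  (X : 'I_L -> vec d) (y : 'I_L -> R) (x : vec d) (w : vec d) (q : R) : R :=
  Rsup phi Omega lambda X y w + q * phi (dot x w) + (1 - q) * phi (- dot x w).

Definition is_minimizer {d : nat} (f : vec d -> R) (w : vec d) : Prop :=
  forall w', f w <= f w'.

Definition Dphi {L d : nat} (phi : R -> R) (Omega : vec d -> R) (lambda : R)
  (X : 'I_L -> vec d) (y : 'I_L -> R) (x : vec d) (wsup w : vec d) (q : R) : R :=
  Rsemi phi Omega lambda X y x w q - Rsemi phi Omega lambda X y x wsup q.

Definition in_C {L d : nat} (phi : R -> R) (Omega : vec d -> R) (lambda : R)
  (X : 'I_L -> vec d) (y : 'I_L -> R) (x : vec d) (w : vec d) : Prop :=
  exists q, 0 <= q <= 1 /\
    is_minimizer (fun v => Rsemi phi Omega lambda X y x v q) w.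

Definition is_max_on_01 (F : R -> R) (m : R) : Prop :=
  (exists q, 0 <= q <= 1 /\ F q = m) /\ (forall q, 0 <= q <= 1 -> F q <= m).

Definition minimizes_max {d : nat} (G : vec d -> R -> R) (w : vec d) : Prop :=
  exists m, is_max_on_01 (G w) m /\
    forall w' m', is_max_on_01 (G w') m' -> m <= m'.

(* Restricted to the line through [wsup] in direction [x], the semi-supervised
   risk has slope (q a - (1 - q) b) |x|^2 at [wsup], because [wsup] is a
   critical point of the supervised risk.  The hypothesis on [q] says exactly
   that this affine function of [q] has no root in [0,1], so it has the same
   sign at q = 0 and q = 1: [wsup] minimizes no semi-supervised risk, and a
   small step along the line decreases both extreme risks at once.  Since
   [D(w, q)] is affine in [q], this step makes [D] negative for every [q],
   so the minimax value is negative. *)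

From HB Require Import structures.
From mathcomp Require Import ssreflect ssrfun ssrbool eqtype ssrnat seq choice fintype bigop.
From Stdlib Require Import Reals Lra FunctionalExtensionality Classical.
Open Scope R_scope.

HB.instance Definition _ :=
  Monoid.isComLaw.Build R 0%R Rplus (fun a b c => esym (Rplus_assoc a b c))
    Rplus_comm Rplus_0_l.

Lemma dot_addr d (u v w : vec d) : dot u (vadd v w) = dot u v + dot u w.
Proof. by rewrite /dot /vadd -big_split /=; apply: eq_bigr => i _; ring. Qed.

Lemma dot_scaler d (u v : vec d) t : dot u (vscale t v) = t * dot u v.
Proof. by rewrite /dot /vscale; elim/big_rec2: _ => [|i y1 y2 _ ->]; ring. Qed.

Lemma dot_scalel d (u v : vec d) t : dot (vscale t u) v = t * dot u v.
Proof. by rewrite /dot /vscale; elim/big_rec2: _ => [|i y1 y2 _ ->]; ring. Qed.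

Lemma dot_self_ge0 d (x : vec d) : 0 <= dot x x.
Proof.
rewrite /dot; elim/big_rec: _ => [|j s _ Hs]; first exact: Rle_refl.
by have := Rle_0_sqr (x j); rewrite /Rsqr; lra.
Qed.

Lemma dot_self_gt0 {d} {x : vec d} {i} : x i <> 0 -> 0 < dot x x.
Proof.
move=> xi_neq0; rewrite /dot (bigD1 i) //=.
have rest_ge0 : 0 <= \big[Rplus/R0]_(j < d | j != i) (x j * x j).
  elim/big_rec: _ => [|j s _ Hs]; first exact: Rle_refl.
  by have := Rle_0_sqr (x j); rewrite /Rsqr; lra.
apply: Rplus_lt_le_0_compat rest_ge0.
by have := Rsqr_pos_lt _ xi_neq0; rewrite /Rsqr.
Qed.

Lemma vnorm_scale d (x : vec d) t : vnorm (vscale t x) = Rabs t * vnorm x.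
Proof.
rewrite /vnorm dot_scalel dot_scaler -Rmult_assoc sqrt_mult ?sqrt_Rsqr_abs //.
  exact: Rle_0_sqr.
exact: dot_self_ge0.
Qed.

Lemma vadd_scale0 d (w x : vec d) : vadd w (vscale 0 x) = w.
Proof. by apply: functional_extensionality => i; rewrite /vadd /vscale; ring. Qed.

Lemma differentiable_at_line {d} {f : vec d -> R} {w x} :
  0 < dot x x -> differentiable_at f w ->
  exists l, derivable_pt_lim (fun t => f (vadd w (vscale t x))) 0 l.
Proof.
move=> x_gt0 [g Hg]; exists (dot g x) => eps eps_gt0.
have nx_gt0 : 0 < vnorm x by apply: sqrt_lt_R0.
have [delta [delta_gt0 Hdelta]] := Hg (eps / (2 * vnorm x)) ltac:(apply: Rdiv_lt_0_compat; lra).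
have delta'_gt0 : 0 < delta / vnorm x by apply: Rdiv_lt_0_compat.
exists (mkposreal _ delta'_gt0) => h h_neq0 h_small /=.
have ht_gt0 : 0 < Rabs h by apply: Rabs_pos_lt.
have step_small : vnorm (vscale h x) < delta.
  rewrite vnorm_scale.
  have := Rmult_lt_compat_r _ _ _ nx_gt0 h_small.
  by rewrite /= /Rdiv Rmult_assoc Rinv_l; lra.
have := Hdelta _ step_small.
rewrite vnorm_scale dot_scaler Rplus_0_l vadd_scale0 => Hbound.
have -> : (f (vadd w (vscale h x)) - f w) / h - dot g x
          = (f (vadd w (vscale h x)) - f w - h * dot g x) / h by field.
rewrite /Rdiv Rabs_mult Rabs_inv -/(Rdiv _ _).
apply: (Rle_lt_trans _ (eps / 2)); last lra.
have -> : eps / 2 = (eps / (2 * vnorm x) * (Rabs h * vnorm x)) / Rabs h by field; lra.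
by apply: Rmult_le_compat_r => //; left; apply: Rinv_0_lt_compat.
Qed.

Lemma derivable_pt_lim_linear c s : derivable_pt_lim (fun t => c + t * s) 0 s.
Proof.
move=> eps eps_gt0; exists (mkposreal 1 Rlt_0_1) => h h_neq0 _.
have -> : (c + (0 + h) * s - (c + 0 * s)) / h - s = 0 by field.
by rewrite Rabs_R0.
Qed.

Lemma derivable_pt_lim_comp_linear (f : R -> R) c s l :
  derivable_pt_lim f c l -> derivable_pt_lim (fun t => f (c + t * s)) 0 (l * s).
Proof.
move=> Hf.
have := derivable_pt_lim_comp (fun t => c + t * s) f 0 s l (derivable_pt_lim_linear c s).
by rewrite /= Rmult_0_l Rplus_0_r; apply.
Qed.

(* The difference quotient stays within |l| of l, hence has the sign of l. *)
Lemma derivable_pt_lim_descent {f l} : derivable_pt_lim f 0 l -> l <> 0 ->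
  exists del, 0 < del /\ forall t, Rabs t < del -> t * l < 0 -> f t < f 0.
Proof.
move=> Hf l_neq0; have [del Hdel] := Hf (Rabs l) (Rabs_pos_lt _ l_neq0).
exists del; split; first exact: cond_pos.
move=> t t_small tl_lt0.
have t_neq0 : t <> 0 by move=> t0; rewrite t0 Rmult_0_l in tl_lt0; lra.
have := Hdel t t_neq0 t_small; rewrite Rplus_0_l => Hq.
set q := (f t - f 0) / t in Hq.
have ql_gt0 : 0 < q * l.
  move: Hq; rewrite /Rabs; case: Rcase_abs; case: Rcase_abs => *; nra.
have diff_eq : f t - f 0 = q * t by rewrite /q; field.
nra.
Qed.

Lemma derivable_pt_lim_common_descent {f g l m} :
  derivable_pt_lim f 0 l -> derivable_pt_lim g 0 m -> 0 < l * m ->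
  exists t, f t < f 0 /\ g t < g 0.
Proof.
move=> Hf Hg lm_gt0.
have l_neq0 : l <> 0 by move=> l0; rewrite l0 Rmult_0_l in lm_gt0; lra.
have m_neq0 : m <> 0 by move=> m0; rewrite m0 Rmult_0_r in lm_gt0; lra.
have [df [df_gt0 Hdf]] := derivable_pt_lim_descent Hf l_neq0.
have [dg [dg_gt0 Hdg]] := derivable_pt_lim_descent Hg m_neq0.
have min_gt0 : 0 < Rmin df dg by apply: Rmin_glb_lt.
have al_ge0 := Rabs_pos l.
set k := Rmin df dg / (2 * (Rabs l + 1)).
have k_gt0 : 0 < k by apply: Rdiv_lt_0_compat; lra.
have t_small : Rabs (- (l * k)) < Rmin df dg.
  rewrite Rabs_Ropp Rabs_mult (Rabs_right k); last lra.
  have -> : Rmin df dg = 2 * (Rabs l + 1) * k by rewrite /k; field; lra.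
  nra.
have min_le_df := Rmin_l df dg; have min_le_dg := Rmin_r df dg.
(* Since [l m > 0], the step [t = - l k] has [t l < 0] and [t m < 0]. *)
exists (- (l * k)); split.
- by apply: Hdf; [lra | have := Rsqr_pos_lt _ l_neq0; rewrite /Rsqr; nra].
- by apply: Hdg; [lra | nra].
Qed.

Lemma derivable_pt_lim_min0 {f l} :
  derivable_pt_lim f 0 l -> (forall t, f 0 <= f t) -> l = 0.
Proof.
move=> Hf fmin; apply: NNPP => l_neq0.
have [t [ft_lt _]] := derivable_pt_lim_common_descent Hf Hf
  ltac:(have := Rsqr_pos_lt _ l_neq0; rewrite /Rsqr; lra).
by have := fmin t; lra.
Qed.

Lemma affine_no_root_mul_gt0 {u v} :
  (forall q, 0 <= q <= 1 -> q * u + (1 - q) * v <> 0) -> 0 < u * v.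
Proof.
move=> no_root; apply: Rnot_le_lt => uv_le0.
have u_neq0 : u <> 0 by have := no_root 1; lra.
have v_neq0 : v <> 0 by have := no_root 0; lra.
have vu_neq0 : v - u <> 0.
  move=> vu0; have u_eq_v : u = v by lra.
  by rewrite u_eq_v in uv_le0; have := Rsqr_pos_lt _ v_neq0; rewrite /Rsqr; lra.
have q_def : v / (v - u) * (v - u) = v by field.
apply: (no_root (v / (v - u))); last by field.
by case: (Rle_lt_dec 0 v) => v_sgn; split; nra.
Qed.

Section Risks.

Variables (L d : nat) (phi : R -> R) (Omega : vec d -> R) (lambda : R).
Variables (X : 'I_L -> vec d) (y : 'I_L -> R) (x : vec d).

Lemma Rsemi_line_derivative q {w r a b} :
  derivable_pt_lim (fun t => Rsup phi Omega lambda X y (vadd w (vscale t x))) 0 r ->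
  derivable_pt_lim phi (dot x w) a -> derivable_pt_lim phi (- dot x w) b ->
  derivable_pt_lim (fun t => Rsemi phi Omega lambda X y x (vadd w (vscale t x)) q) 0
    (r + (q * a - (1 - q) * b) * dot x x).
Proof.
move=> Hr Ha Hb.
have -> : (fun t => Rsemi phi Omega lambda X y x (vadd w (vscale t x)) q)
  = fun t => Rsup phi Omega lambda X y (vadd w (vscale t x))
             + q * phi (dot x w + t * dot x x)
             + (1 - q) * phi (- dot x w + t * - dot x x).
  apply: functional_extensionality => t.
  by rewrite /Rsemi dot_addr dot_scaler Ropp_plus_distr -Ropp_mult_distr_r.
have -> : r + (q * a - (1 - q) * b) * dot x x
  = r + q * (a * dot x x) + (1 - q) * (b * - dot x x) by ring.
apply: derivable_pt_lim_plus; first apply: derivable_pt_lim_plus => //.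
- exact/derivable_pt_lim_scal/derivable_pt_lim_comp_linear.
- exact/derivable_pt_lim_scal/derivable_pt_lim_comp_linear.
Qed.

Lemma Dphi_affine wsup w q :
  Dphi phi Omega lambda X y x wsup w q
  = q * Dphi phi Omega lambda X y x wsup w 1
    + (1 - q) * Dphi phi Omega lambda X y x wsup w 0.
Proof. by rewrite /Dphi /Rsemi; ring. Qed.

End Risks.

Lemma is_max_on_01_affine F :
  (forall q, F q = q * F 1 + (1 - q) * F 0) -> is_max_on_01 F (Rmax (F 0) (F 1)).
Proof.
move=> F_affine; split.
- case: (Rle_dec (F 0) (F 1)) => F01.
  + by exists 1; split; [lra | rewrite Rmax_right].
  + by exists 0; split; [lra | rewrite Rmax_left; lra].
- move=> q q01; rewrite F_affine.
  by have := Rmax_l (F 0) (F 1); have := Rmax_r (F 0) (F 1); nra.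
Qed.

Theorem lemma3 (L d : nat) (HL : (1 <= L)%nat) (Hd : (1 <= d)%nat)
  (X : 'I_L -> vec d) (y : 'I_L -> R) (Hy : forall i, y i = 1 \/ y i = -1)
  (phi : R -> R) (Omega : vec d -> R) (lambda : R)
  (HOmega : convex_vec Omega) (Hlambda : 0 <= lambda)
  (x : vec d) (wsup : vec d)
  (Hwsup : is_minimizer (Rsup phi Omega lambda X y) wsup)
  (Hphi : convex_fun phi)
  (Hdiff : differentiable_at (Rsup phi Omega lambda X y) wsup)
  (Hstrict : forall q, 0 <= q <= 1 ->
     strictly_convex_vec (fun w => Rsemi phi Omega lambda X y x w q))
  (a b : R)
  (Ha : derivable_pt_lim phi (dot x wsup) a)
  (Hb : derivable_pt_lim phi (- dot x wsup) b)
  (Hnoq : ~ exists q, 0 <= q <= 1 /\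
     forall i, (a + b) * q * x i = b * x i) :
  ~ in_C phi Omega lambda X y x wsup /\
  forall wsemi,
    minimizes_max (Dphi phi Omega lambda X y x wsup) wsemi ->
    wsemi <> wsup /\
    forall q, 0 <= q <= 1 -> Dphi phi Omega lambda X y x wsup wsemi q < 0.
Proof.
have [i xi_neq0] : exists i, x i <> 0.
  apply: NNPP => x_eq0; apply: Hnoq; exists 0; split; first lra.
  move=> i; have -> : x i = 0 by apply: NNPP => xi_neq0; apply: x_eq0; exists i.
  ring.
have x_gt0 := dot_self_gt0 xi_neq0.
have no_root q : 0 <= q <= 1 -> q * a + (1 - q) * - b <> 0.
  move=> q01 root; apply: Hnoq; exists q; split => // j.
  by have -> : (a + b) * q = b by lra.
have ab_gt0 := affine_no_root_mul_gt0 no_root.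
have [r Hr] := differentiable_at_line x_gt0 Hdiff.
have r0 : r = 0.
  by apply: (derivable_pt_lim_min0 Hr) => t; rewrite vadd_scale0; apply: Hwsup.
subst r.
have slope q := Rsemi_line_derivative L d phi Omega lambda X y x q Hr Ha Hb.
split.
  move=> [q [q01 q_min]].
  have slope0 : 0 + (q * a - (1 - q) * b) * dot x x = 0.
    by apply: (derivable_pt_lim_min0 (slope q)) => t; rewrite vadd_scale0; apply: q_min.
  rewrite Rplus_0_l in slope0.
  by have := no_root q q01; have := Rmult_integral _ _ slope0; lra.
have slopes_same_sign := Rmult_lt_0_compat _ _ ab_gt0 (Rmult_lt_0_compat _ _ x_gt0 x_gt0).
have [t [descent0 descent1]] :=
  derivable_pt_lim_common_descent (slope 0) (slope 1) ltac:(lra).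
rewrite !vadd_scale0 in descent0 descent1.
set D := Dphi phi Omega lambda X y x wsup.
set w' := vadd wsup (vscale t x) in descent0 descent1.
have D_neg : Rmax (D w' 0) (D w' 1) < 0 by apply: Rmax_lub_lt; rewrite /D /Dphi; lra.
have D_max := is_max_on_01_affine _ (Dphi_affine L d phi Omega lambda X y x wsup w').
move=> wsemi [m [[_ m_ub] m_min]].
have m_neg := Rle_lt_trans _ _ _ (m_min _ _ D_max) D_neg.
split; last by move=> q q01; have := m_ub q q01; lra.
by move=> wsemi_eq; have := m_ub 0 ltac:(lra); rewrite wsemi_eq /D /Dphi; lra.
Qed.
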